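(* The reflection length and codimension functions do not coincide (i.e. there exists $g$ with $\ell(g)\neq\operatorname{codim}(g)$) in the following groups: (a) $G(m,p,n)$ with $1<p<m$ and $n\ge 2$; (b) $G(m,m,n)$ with $m\ge 3$ and $n\ge 3$.
   Context: $G(m,1,n)$ is the group of $n\times n$ monomial matrices whose nonzero entries are $m$-th roots of unity, acting on $V=\mathbb{C}^n$; for $p\mid m$, $G(m,p,n)$ is the subgroup of elements whose nonzero entries multiply to an $(m/p)$-th root of unity. A reflection is an element of finite order fixing a hyperplane pointwise. $\ell(g)$ is the minimal number of reflections of the group whose product is $g$ ($\ell(1)=0$), and $\operatorname{codim}(g)=n-\dim\{v\in V:gv=v\}$. *)

From HB Require Import structures.
From mathcomp Require Import all_boot all_order all_algebra all_fingroup all_field.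
Set Implicit Arguments. Unset Strict Implicit. Unset Printing Implicit Defensive.
Import Order.TTheory GRing.Theory Num.Theory.
Local Open Scope ring_scope.

(* Matrices act on column vectors of V = algC^n (algC = algebraic complex numbers,
   which contain all roots of unity). *)

Definition monomial_mx (n : nat) (s : 'S_n) (d : 'I_n -> algC) : 'M[algC]_n :=
  \matrix_(i, j) (if j == s i then d i else 0).

Definition in_Gmpn (m p n : nat) (g : 'M[algC]_n) : Prop :=
  exists (s : 'S_n) (d : 'I_n -> algC),
    [/\ g = monomial_mx s d,
        forall i, d i ^+ m = 1 &
        (\prod_(i < n) d i) ^+ (m %/ p) = 1].

(* codim g = n - dim {v in V | g v = v}.  The fixed space of g on column
   vectors is (via transposition) the row kernel of g^T - 1. *)
Definition codim (n : nat) (g : 'M[algC]_n) : nat :=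
  (n - \rank (kermx (g^T - 1%:M)))%N.

Definition is_reflection (m p n : nat) (r : 'M[algC]_n) : Prop :=
  [/\ in_Gmpn m p r,
      exists k : nat, (0 < k)%N /\ iter k (mulmx r) 1%:M = 1%:M &
      \rank (kermx (r^T - 1%:M)) = n.-1 /\ r != 1%:M].

Definition prod_of_refl (m p n : nat) (g : 'M[algC]_n) (k : nat) : Prop :=
  exists rs : seq 'M[algC]_n,
    [/\ size rs = k, forall r, r \in rs -> is_reflection m p r &
        g = foldr mulmx 1%:M rs].

Definition refl_length_is (m p n : nat) (g : 'M[algC]_n) (k : nat) : Prop :=
  prod_of_refl m p g k /\ forall k', (k' < k)%N -> ~ prod_of_refl m p g k'.

From HB Require Import structures.
From mathcomp Require Import all_boot all_order all_algebra all_fingroup all_field.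
From mathcomp Require Import zify ring.
Set Implicit Arguments. Unset Strict Implicit. Unset Printing Implicit Defensive.
Import Order.TTheory GRing.Theory Num.Theory.
Local Open Scope ring_scope.

(* Let z be a primitive m-th root of unity.  For 1 < p < m, the element
   g = diag(z, z^(p-1), 1, ..., 1) of G(m,p,n) has codimension 2 and is a product of
   three reflections.  If g = r1 r2 with reflections r1, r2, then the fixed space of g
   is fixed by both factors, so they act on the plane of the first two coordinates;
   there a reflection is either diagonal with an (m/p)-th root of unity as entry or of
   transposition type with determinant -1 on the plane.  Two diagonal ones cannot
   produce the entry z, two of transposition type give determinant 1 on the plane,
   whereas g gives z^p.
   In G(m,m,n) every reflection has determinant -1, so a product of k reflections has
   determinant (-1)^k; the element
   diag(z, z, z^(m-2), 1, ..., 1) has determinant 1, codimension 3 and is a product of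
   four reflections. *)

Section MonomialMatrices.
Variable n : nat.
Implicit Types (s t : 'S_n) (d e : 'I_n -> algC).

Lemma monomial_mxE s d i j : monomial_mx s d i j = if j == s i then d i else 0.
Proof. by rewrite mxE. Qed.

Lemma mul_monomial_mx s t d e :
  monomial_mx s d *m monomial_mx t e = monomial_mx (s * t) (fun i => d i * e (s i)).
Proof.
apply/matrixP=> i j; rewrite !mxE (bigD1 (s i)) //= big1 => [|k /negbTE ski].
  by rewrite !mxE eqxx permM; case: eqP; rewrite ?mulr0 addr0.
by rewrite !mxE ski mul0r.
Qed.

Lemma monomial_mx1 : monomial_mx (1 : 'S_n) (fun _ => 1) = 1%:M.
Proof. by apply/matrixP=> i j; rewrite !mxE perm1 eq_sym; case: eqP. Qed.

Lemma eq_monomial_mx s d e : d =1 e -> monomial_mx s d = monomial_mx s e.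
Proof. by move=> de; apply/matrixP=> i j; rewrite !mxE de. Qed.

Lemma monomial_mx_diag d : monomial_mx 1 d = diag_mx (\row_i d i).
Proof. by apply/matrixP=> i j; rewrite !mxE perm1 eq_sym; case: eqP => [->|]. Qed.

Lemma det_monomial_mx s d : \det (monomial_mx s d) = (-1) ^+ s * \prod_i d i.
Proof.
have -> : monomial_mx s d = monomial_mx 1 d *m perm_mx s.
  apply/matrixP=> i j; rewrite monomial_mx_diag mul_diag_mx !mxE.
  by rewrite eq_sym; case: eqP; rewrite ?mulr1 ?mulr0.
rewrite det_mulmx monomial_mx_diag det_diag det_perm mulrC.
by congr (_ * _); apply: eq_bigr => i _; rewrite mxE.
Qed.

Lemma mul_diag_monomial_mx d e :
  monomial_mx 1 d *m monomial_mx 1 e = monomial_mx 1 (fun i => d i * e i).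
Proof. by rewrite mul_monomial_mx mulg1; apply: eq_monomial_mx => i; rewrite perm1. Qed.

Lemma monomial_mx_inj s t d e :
  (forall i, d i != 0) -> monomial_mx s d = monomial_mx t e -> s = t /\ d =1 e.
Proof.
move=> d_neq0 /matrixP de.
have st i : s i = t i /\ d i = e i.
  move: (de i (s i)) (d_neq0 i); rewrite !monomial_mxE eqxx.
  by case: eqP => [-> ->|_ ->]; rewrite ?eqxx.
by split=> [|i]; [apply/permP=> i|]; case: (st i).
Qed.

End MonomialMatrices.

Section Rank.
Variable F : fieldType.

Lemma mxrank_outer n (u : 'cV[F]_n) (v : 'rV[F]_n) : u *m v != 0 -> \rank (u *m v) = 1%N.
Proof.
rewrite -mxrank_eq0 => nz; apply/eqP; rewrite eqn_leq lt0n nz andbT.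
exact: leq_trans (mxrankM_maxr _ _) (rank_leq_row _).
Qed.

Lemma rank1_outer n (A : 'M[F]_n) :
  \rank A = 1%N -> exists (u : 'cV[F]_n) (v : 'rV[F]_n), A = u *m v.
Proof.
move=> rA; rewrite -(mulmx_base A); move: (col_base A) (row_base A); rewrite rA.
by move=> u v; exists u, v.
Qed.

Lemma rank1_minor n (A : 'M[F]_n) a b :
  \rank A = 1%N -> A a a * A b b = A a b * A b a.
Proof.
by case/rank1_outer=> u [v ->]; rewrite !mxE !big_ord1; ring.
Qed.

Lemma mxrank_diag n (d : 'rV[F]_n) : \rank (diag_mx d) = #|[pred i | d 0 i != 0]|.
Proof.
set P := [pred i | d 0 i != 0].
have /mxdirectP/= rS := @mxdirect_delta F 'I_n P n id (in2W (@inj_id _)).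
have -> : \rank (diag_mx d) = \rank (\sum_(i | P i) <<delta_mx 0 i : 'rV[F]_n>>)%MS.
  apply/eqmx_rank/andP; split.
    apply/row_subP=> i; rewrite row_diag_mx.
    have [d0|nz] := eqVneq (d 0 i) 0; first by rewrite d0 scale0r sub0mx.
    by rewrite scalemx_sub // (sumsmx_sup i) ?genmxE.
  apply/sumsmx_subP=> i nz; rewrite genmxE.
  rewrite -[delta_mx _ _](scalerK nz) -row_diag_mx.
  by rewrite scalemx_sub // row_sub.
rewrite rS -sum1_card; apply: eq_bigr => i _.
by rewrite mxrank_gen mxrank_delta.
Qed.

End Rank.

Lemma det_rank1_update (R : comNzRingType) n (u : 'cV[R]_n) (v : 'rV[R]_n) :
  \det (1%:M + u *m v) = 1 + (v *m u) 0 0.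
Proof.
pose M := block_mx 1%:M (- u) v (1%:M : 'M_1).
have eM1 : block_mx 1%:M 0 v 1%:M *m block_mx 1%:M (- u) 0 (1%:M + v *m u) = M.
  rewrite mulmx_block !mul1mx !mulmx1 ?mul0mx ?mulmx0 ?addr0 ?add0r.
  by rewrite mulmxN addrCA addNr addr0.
have eM2 : block_mx (1%:M + u *m v) (- u) 0 1%:M *m block_mx 1%:M 0 v 1%:M = M.
  by rewrite mulmx_block !mul1mx !mulmx1 ?mul0mx ?mulmx0 ?addr0 ?add0r mulNmx addrK.
have := congr1 determinant eM1; rewrite -eM2 !det_mulmx !det_lblock !det_ublock.
by rewrite !det1 !mul1r !mulr1 => <-; rewrite det_mx11 !mxE eqxx.
Qed.

(* If [det r = 1] then [r = 1 + u v] with [v u = 0], so [r ^+ k = 1 + k (u v)]. *)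
Lemma det_finite_order_rank1 (F : numFieldType) n (r : 'M[F]_n) k :
  (0 < k)%N -> iter k (mulmx r) 1%:M = 1%:M -> \rank (r - 1%:M) = 1%N -> \det r != 1.
Proof.
move=> k_gt0 rk /[dup] rN /rank1_outer[u [v Nuv]].
have rE : r = 1%:M + u *m v by rewrite -Nuv addrC subrK.
suff : (v *m u) 0 0 != 0.
  by rewrite rE det_rank1_update; apply: contra_neq => /(canRL (addKr 1)); rewrite addNr.
apply/eqP => vu0.
have N2 : (u *m v) *m (u *m v) = 0.
  by rewrite mulmxA -(mulmxA u) [v *m u]mx11_scalar vu0 raddf0 mulmx0 mul0mx.
have rpow j : iter j (mulmx r) 1%:M = 1%:M + j%:R *: (u *m v).
  elim: j => [|j IHj] /=; first by rewrite scale0r addr0.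
  rewrite IHj rE mulmxDr mulmx1 mulmxDl mul1mx -scalemxAr N2 scaler0 addr0.
  by rewrite -addrA -[in RHS]natr1 scalerDl scale1r (addrC (u *m v)).
move: rk; rewrite rpow => /(canRL (addKr 1%:M)); rewrite addNr => /eqP.
rewrite scaler_eq0 pnatr_eq0 (gtn_eqF k_gt0) /= => /eqP uv0.
by move: rN; rewrite Nuv uv0 mxrank0.
Qed.

Lemma perm_supported_on_pair (T : finType) (s : {perm T}) x y :
  (forall z, z != x -> z != y -> s z = z) -> s = 1%g \/ s = tperm x y.
Proof.
move=> sfix; have spair z : z \in [:: x; y] -> s z \in [:: x; y].
  move=> zxy; apply: contraT; rewrite !inE negb_or => /andP[szx szy].
  have /perm_inj szz := sfix _ szx szy.
  by move: zxy; rewrite -szz !inE (negbTE szx) (negbTE szy).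
have [sx|sxn] := eqVneq (s x) x.
  left; apply/permP=> z; rewrite perm1.
  have [->//|zx] := eqVneq z x; have [zy|zy] := eqVneq z y; last exact: sfix.
  subst z; have := spair y; rewrite !inE eqxx orbT => /(_ isT) /orP[/eqP syx|/eqP //].
  by move/negP: zx; case; apply/eqP/(@perm_inj _ s); rewrite syx sx.
have sxy : s x = y by move: (spair x); rewrite !inE eqxx (negbTE sxn) => /(_ isT)/eqP.
have syx : s y = x.
  have := spair y; rewrite !inE eqxx orbT => /(_ isT) /orP[/eqP //|/eqP syy].
  by move/negP: sxn; case; rewrite sxy (perm_inj (etrans sxy (esym syy))).
right; apply/permP=> z; case: tpermP => [->|->|zx zy] //.
by apply: sfix; apply/eqP.
Qed.

Lemma prim_root_expr_neq1 (R : ringType) m (z : R) k :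
  m.-primitive_root z -> (0 < k < m)%N -> z ^+ k != 1.
Proof. by move=> zm /andP[k0 km]; rewrite -(prim_order_dvd zm) gtnNdvd. Qed.

Definition fixmx n (g : 'M[algC]_n) : 'M[algC]_n := kermx (g^T - 1%:M).

Section Codimension.
Variable n : nat.
Implicit Types (a b g r : 'M[algC]_n) (s : 'S_n) (d : 'I_n -> algC).

Lemma codimE g : codim g = \rank (g^T - 1%:M).
Proof. by rewrite /codim mxrank_ker subKn // rank_leq_row. Qed.

Lemma mxrank_fixmx g : \rank (fixmx g) = (n - codim g)%N.
Proof. by rewrite codimE mxrank_ker. Qed.

Lemma codim1 : codim (1%:M : 'M[algC]_n) = 0%N.
Proof. by rewrite codimE trmx1 subrr mxrank0. Qed.

Lemma codim_mul a b : (codim (a *m b) <= codim a + codim b)%N.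
Proof.
rewrite !codimE trmx_mul.
have -> : b^T *m a^T - 1%:M = b^T *m (a^T - 1%:M) + (b^T - 1%:M).
  by rewrite mulmxBr mulmx1 addrA subrK.
by apply: leq_trans (mxrank_add _ _) _; rewrite leq_add // mxrankM_maxr.
Qed.

Lemma fixmx_mul a b :
  codim (a *m b) = (codim a + codim b)%N -> (fixmx (a *m b) <= fixmx a :&: fixmx b)%MS.
Proof.
move=> cab; have capS : (fixmx a :&: fixmx b <= fixmx (a *m b))%MS.
  apply/sub_kermxP; rewrite trmx_mul mulmxBr mulmx1 mulmxA.
  have /sub_kermxP : (fixmx a :&: fixmx b <= fixmx b)%MS by exact: capmxSr.
  have /sub_kermxP : (fixmx a :&: fixmx b <= fixmx a)%MS by exact: capmxSl.
  by rewrite !mulmxBr !mulmx1 => /subr0_eq fa /subr0_eq ->; rewrite fa subrr.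
rewrite -(mxrank_leqif_sup capS) eqn_leq mxrankS //=.
have := mxrank_sum_cap (fixmx a) (fixmx b); have := rank_leq_col (fixmx a + fixmx b)%MS.
have := rank_leq_row (a^T - 1%:M); have := rank_leq_row (b^T - 1%:M).
by rewrite !mxrank_fixmx cab !codimE; lia.
Qed.

Lemma codim_diag d : codim (monomial_mx 1 d) = #|[pred i | d i != 1]|.
Proof.
rewrite codimE; have -> : (monomial_mx 1 d)^T - 1%:M = diag_mx (\row_i (d i - 1)).
  apply/matrixP=> i j; rewrite monomial_mx_diag tr_diag_mx !mxE.
  by case: eqP => _; rewrite ?mulr1n ?mulr0n ?subr0.
rewrite mxrank_diag.
by apply: eq_card => i; rewrite !inE mxE subr_eq0.
Qed.

Lemma codim_diag_support d (S : seq 'I_n) :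
  uniq S -> (forall i, (d i != 1) = (i \in S)) -> codim (monomial_mx 1 d) = size S.
Proof.
by move=> uS dS; rewrite codim_diag -(card_uniqP uS); apply: eq_card => i; rewrite inE dS.
Qed.

Lemma sub_fixmx_delta s d j :
  ((delta_mx 0 j : 'rV_n) <= fixmx (monomial_mx s d))%MS = (s j == j) && (d j == 1).
Proof.
apply/sub_kermxP/andP => [/matrixP fixj | [/eqP sj /eqP dj]].
  have := fixj 0 j; rewrite !mxE (bigD1 j) //= big1 => [|k /negbTE kj]; last first.
    by rewrite !mxE kj mul0r.
  rewrite !mxE !eqxx mul1r addr0 => /eqP; rewrite subr_eq0.
  by case: ifP => [/eqP <-|_]; rewrite ?eqxx // eq_sym oner_eq0.
apply/matrixP=> i y; rewrite [i]ord1 -rowE !mxE.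
have [<-|yj] := eqVneq j y; first by rewrite sj eqxx dj subrr.
by rewrite -{1}sj (inj_eq perm_inj) (negbTE yj) subrr.
Qed.

Lemma rank_fixmx_outer r (u : 'cV_n) (v : 'rV_n) :
  r^T - 1%:M = u *m v -> u *m v != 0 -> \rank (fixmx r) = n.-1.
Proof. by move=> rE uv0; rewrite mxrank_ker rE mxrank_outer // subn1. Qed.

End Codimension.

Section GroupGmpn.
Variables m p n : nat.
Implicit Types (g h : 'M[algC]_n).

Lemma in_Gmpn1 : in_Gmpn m p (1%:M : 'M[algC]_n).
Proof.
exists 1%g, (fun _ => 1); split; first by rewrite monomial_mx1.
  by move=> i; rewrite expr1n.
by rewrite prodr_const !expr1n.
Qed.

Lemma in_GmpnM g h : in_Gmpn m p g -> in_Gmpn m p h -> in_Gmpn m p (g *m h).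
Proof.
move=> [s [d [-> dm dp]]] [t [e [-> em ep]]].
exists (s * t)%g, (fun i => d i * e (s i)); split.
- exact: mul_monomial_mx.
- by move=> i; rewrite exprMn dm em mulr1.
rewrite big_split /=; have -> : \prod_i e (s i) = \prod_i e i.
  by rewrite (reindex_inj (@perm_inj _ s^-1)); apply: eq_bigr => i _; rewrite permKV.
by rewrite exprMn dp ep mulr1.
Qed.

Lemma in_Gmpn_prod_refl g k : prod_of_refl m p g k -> in_Gmpn m p g.
Proof.
case=> rs [_ rsR ->] {g}; elim: rs rsR => [|r rs IHrs] rsR /=; first exact: in_Gmpn1.
apply: in_GmpnM; first by case: (rsR r (mem_head _ _)).
by apply: IHrs => x xrs; apply: rsR; rewrite inE xrs orbT.
Qed.

End GroupGmpn.

Section Reflections.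
Variables m p n : nat.
Implicit Types (r g : 'M[algC]_n).

Lemma codim_reflection r : is_reflection m p r -> codim r = 1%N.
Proof.
case=> _ _ [rfix r1]; rewrite /codim rfix.
case: n r rfix r1 => [|n'] r _ r1 //=; last by rewrite subSn // subnn.
by move: r1; rewrite [r]flatmx0 [1%:M]flatmx0 eqxx.
Qed.

Lemma codim_prod_refl g k : prod_of_refl m p g k -> (codim g <= k)%N.
Proof.
case=> rs [<- rsR ->] {g k}; elim: rs rsR => [|r rs IHrs] rsR /=.
  by rewrite codim1.
apply: leq_trans (codim_mul _ _) _.
rewrite (codim_reflection (rsR r (mem_head _ _))) add1n ltnS IHrs // => x xrs.
by apply: rsR; rewrite inE xrs orbT.
Qed.

End Reflections.

Section ReflectionsGmmn.
Variables m n : nat.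
Hypothesis m_gt0 : (0 < m)%N.
Implicit Types (r g : 'M[algC]_n).

Lemma det_reflection r : is_reflection m m r -> \det r = -1.
Proof.
move=> /[dup] rR [[s [d [rE _ dprod]]] [k [k_gt0 rk]] _].
have rN : \rank (r - 1%:M) = 1%N.
  by rewrite -mxrank_tr linearB /= trmx1 -codimE (codim_reflection rR).
have := det_finite_order_rank1 k_gt0 rk rN.
move: dprod; rewrite rE det_monomial_mx divnn m_gt0 expr1 => ->; rewrite mulr1.
by case: (odd_perm s); rewrite ?expr1 ?expr0 ?eqxx.
Qed.

Lemma det_prod_refl g k : prod_of_refl m m g k -> \det g = (-1) ^+ k.
Proof.
case=> rs [<- rsR ->] {g k}; elim: rs rsR => [|r rs IHrs] rsR /=; first by rewrite det1.
rewrite det_mulmx (det_reflection (rsR r (mem_head _ _))) IHrs ?exprS // => x xrs.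
by apply: rsR; rewrite inE xrs orbT.
Qed.

End ReflectionsGmmn.

(* [a ^+ m.-1] is the inverse of [a] when [a] is an m-th root of unity. *)
Definition transp_weights (m n : nat) (i j : 'I_n) (a : algC) : 'I_n -> algC :=
  fun k => if k == i then a else if k == j then a ^+ m.-1 else 1.

Definition refl_transp (m n : nat) (i j : 'I_n) (a : algC) : 'M[algC]_n :=
  monomial_mx (tperm i j) (transp_weights m i j a).

Definition diag_weights n (i : 'I_n) (w : algC) : 'I_n -> algC :=
  fun k => if k == i then w else 1.

Definition refl_diag n (i : 'I_n) (w : algC) : 'M[algC]_n := monomial_mx 1 (diag_weights i w).

Section ElementaryReflections.
Variables m p n : nat.
Hypotheses (m_gt0 : (0 < m)%N) (p_dvd_m : (p %| m)%N).
Implicit Types (i j : 'I_n) (a w : algC).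

Lemma prod_transp_weights i j a : i != j -> \prod_k transp_weights m i j a k = a ^+ m.
Proof.
move=> ij; rewrite (bigD1 i) // (bigD1 j) 1?eq_sym //= big1 => [|k /andP[ki kj]].
  by rewrite /transp_weights eqxx eq_sym (negbTE ij) eqxx mulr1 -exprS prednK.
by rewrite /transp_weights (negbTE ki) (negbTE kj).
Qed.

Lemma refl_transp_sqr i j a : i != j -> a ^+ m = 1 ->
  refl_transp m i j a *m refl_transp m i j a = 1%:M.
Proof.
move=> ij am; have ji : j != i by rewrite eq_sym.
rewrite mul_monomial_mx tperm2 -monomial_mx1; apply: eq_monomial_mx => k.
rewrite /transp_weights; case: tpermP => [->|->|/eqP/negbTE-> /eqP/negbTE->].
- by rewrite (negbTE ji) !eqxx -exprS prednK.
- by rewrite (negbTE ji) !eqxx mulrC -exprS prednK.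
- by rewrite mulr1.
Qed.

Lemma is_reflection_transp i j a : i != j -> a ^+ m = 1 ->
  is_reflection m p (refl_transp m i j a).
Proof.
move=> ij am; have ji : j != i by rewrite eq_sym.
split.
- exists (tperm i j), (transp_weights m i j a); split => //.
    move=> k; rewrite /transp_weights; case: ifP => _ //; case: ifP => _.
      by rewrite -exprM mulnC exprM am expr1n.
    by rewrite expr1n.
  by rewrite prod_transp_weights // am expr1n.
- by exists 2%N; rewrite /= mulmx1 refl_transp_sqr.
split.
  pose u := \col_x (if x == i then -1 else if x == j then a else 0 : algC).
  pose v := \row_y (if y == i then 1 else if y == j then - a ^+ m.-1 else 0 : algC).
  apply: (rank_fixmx_outer (u := u) (v := v)); last first.
    apply/eqP=> /matrixP/(_ i i); rewrite !mxE big_ord1 !mxE eqxx mulr1 => /eqP.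
    by rewrite oppr_eq0 oner_eq0.
  apply/matrixP=> x y; rewrite !mxE big_ord1 !mxE /transp_weights.
  have am1 : a * a ^+ m.-1 = 1 by rewrite -exprS prednK.
  case: tpermP => [->|->|/eqP/negbTE-> /eqP/negbTE->];
    rewrite ?eqxx ?(negbTE ij) ?(negbTE ji) /=.
  - have [->|_] := eqVneq x i; first by rewrite (negbTE ij) sub0r mulr1.
    by rewrite subr0 mulr1.
  - have [->|_] := eqVneq x i; first by rewrite (negbTE ij) subr0 mulN1r opprK.
    by case: eqP => _ /=; rewrite ?mulr1n ?mulr0n sub0r ?mulrN ?am1 ?mul0r ?oppr0.
  - by rewrite mulr0; case: eqP => _; rewrite subrr.
apply/eqP=> /matrixP/(_ i i); rewrite !mxE tpermL (negbTE ij) eqxx => /eqP.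
by rewrite eq_sym oner_eq0.
Qed.

Lemma mul_refl_transp1 i j a :
  refl_transp m i j a *m refl_transp m i j 1 = monomial_mx 1 (transp_weights m i j a).
Proof.
rewrite mul_monomial_mx tperm2; apply: eq_monomial_mx => k.
by rewrite {2}/transp_weights expr1n !if_same mulr1.
Qed.

Lemma refl_diag_exp i w k : iter k (mulmx (refl_diag i w)) 1%:M = refl_diag i (w ^+ k).
Proof.
elim: k => [|k IHk] /=.
  by rewrite -monomial_mx1; apply: eq_monomial_mx => l; rewrite /diag_weights if_same.
rewrite IHk mul_monomial_mx mulg1; apply: eq_monomial_mx => l.
by rewrite perm1 /diag_weights; case: ifP; rewrite ?exprS ?mulr1.
Qed.

Lemma is_reflection_diag i w :
  w ^+ (m %/ p) = 1 -> w != 1 -> is_reflection m p (refl_diag i w).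
Proof.
move=> wp w1; have wm : w ^+ m = 1 by rewrite -(divnK p_dvd_m) exprM wp expr1n.
split.
- exists 1%g, (diag_weights i w); split => //.
    by move=> k; rewrite /diag_weights; case: ifP; rewrite ?expr1n.
  rewrite (bigD1 i) //= big1 => [|k /negbTE ki]; last by rewrite /diag_weights ki.
  by rewrite /diag_weights eqxx mulr1.
- exists m; split => //; rewrite refl_diag_exp wm -monomial_mx1.
  by apply: eq_monomial_mx => l; rewrite /diag_weights if_same.
split.
  pose u := \col_x (if x == i then w - 1 else 0 : algC).
  pose v := \row_y (if y == i then 1 else 0 : algC).
  apply: (rank_fixmx_outer (u := u) (v := v)); last first.
    apply/eqP=> /matrixP/(_ i i); rewrite !mxE big_ord1 !mxE eqxx mulr1 => /eqP.
    by rewrite subr_eq0 (negbTE w1).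
  apply/matrixP=> x y; rewrite !mxE big_ord1 !mxE perm1 /diag_weights.
  have [->|_] := eqVneq y i; first by case: eqP; rewrite ?mulr1 ?subr0.
  by rewrite mulr0; case: eqP => _; rewrite subrr.
apply/eqP=> /matrixP/(_ i i); rewrite !mxE perm1 /diag_weights eqxx => /eqP.
by rewrite (negbTE w1).
Qed.

End ElementaryReflections.

Lemma reflection_moving_pair m p n (r : 'M[algC]_n) (s : 'S_n) d (i0 i1 : 'I_n) :
  i0 != i1 -> is_reflection m p r ->
  r = monomial_mx s d -> (\prod_i d i) ^+ (m %/ p) = 1 ->
  (forall j, j != i0 -> j != i1 -> (delta_mx 0 j : 'rV_n) <= fixmx r)%MS ->
  (s = 1%g /\ d i0 ^+ (m %/ p) = 1) \/ (s = tperm i0 i1 /\ d i0 * d i1 = 1).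
Proof.
move=> i01 rR rE dprod rfix.
have out j : j != i0 -> j != i1 -> s j = j /\ d j = 1.
  by move=> j0 j1; have := rfix j j0 j1; rewrite rE sub_fixmx_delta => /andP[/eqP ? /eqP].
have dprod2 : \prod_i d i = d i0 * d i1.
  rewrite (bigD1 i0) // (bigD1 i1) 1?eq_sym //= big1 ?mulr1 // => k /andP[k0 k1].
  by case: (out k k0 k1).
have rk1 : \rank (r^T - 1%:M) = 1%N by rewrite -codimE (codim_reflection rR).
have i10 : i1 != i0 by rewrite eq_sym.
have := rank1_minor i0 i1 rk1.
rewrite !mxE rE !monomial_mxE !eqxx (negbTE i01) (negbTE i10).
have [s1|sT] := perm_supported_on_pair (fun j j0 j1 => (out j j0 j1).1); rewrite ?s1 ?sT.
- rewrite !perm1 !eqxx (negbTE i01) (negbTE i10) subr0 mul0r => /eqP.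
  rewrite mulf_eq0 !subr_eq0 => /orP[/eqP-> | /eqP d1]; first by left; rewrite expr1n.
  by left; split => //; rewrite -dprod dprod2 d1 mulr1.
- rewrite tpermL tpermR !eqxx (negbTE i01) (negbTE i10) !subr0 !sub0r mulrNN mulr1.
  by right; split => //; rewrite mulrC.
Qed.

(* Codimension is additive on r1 r2, so the fixed vectors e_j (j <> i0, i1) of the
   product are fixed by both factors, which therefore act on the plane of e_i0, e_i1. *)
Lemma prod2_reflections_diag m p n (i0 i1 : 'I_n) (e : 'I_n -> algC) (r1 r2 : 'M[algC]_n) :
  (0 < m)%N -> i0 != i1 -> (forall j, (e j != 1) = (j \in [:: i0; i1])) ->
  is_reflection m p r1 -> is_reflection m p r2 -> r1 *m r2 = monomial_mx 1 e ->
  e i0 ^+ (m %/ p) = 1 \/ e i0 * e i1 = 1.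
Proof.
move=> m_gt0 i01 eS r1R r2R rE.
have codim_add : codim (r1 *m r2) = (codim r1 + codim r2)%N.
  by rewrite rE (codim_diag_support (S := [:: i0; i1])) ?(codim_reflection r1R)
    ?(codim_reflection r2R) //= inE i01.
have rfix j : j != i0 -> j != i1 ->
    ((delta_mx 0 j : 'rV_n) <= fixmx r1 /\ (delta_mx 0 j : 'rV_n) <= fixmx r2)%MS.
  move=> j0 j1; have : ((delta_mx 0 j : 'rV_n) <= fixmx (r1 *m r2))%MS.
    by rewrite rE sub_fixmx_delta perm1 eqxx /=; apply/negPn; rewrite eS !inE negb_or j0 j1.
  by move/submx_trans/(_ (fixmx_mul codim_add)); rewrite sub_capmx => /andP.
case: (r1R) => [[s1 [d1 [r1E d1m d1p]]] _ _]; case: (r2R) => [[s2 [d2 [r2E d2m d2p]]] _ _].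
have root_neq0 (x : algC) : x ^+ m = 1 -> x != 0.
  by move=> xm; apply: contra_eq_neq xm => ->; rewrite expr0n gtn_eqF // eq_sym oner_neq0.
have d12_neq0 i : d1 i * d2 (s1 i) != 0 by rewrite mulf_neq0 // root_neq0.
have [s12 d12] : (s1 * s2)%g = 1%g /\ (fun i => d1 i * d2 (s1 i)) =1 e.
  by apply: monomial_mx_inj d12_neq0 _; rewrite -mul_monomial_mx -r1E -r2E.
have tperm_neq1 : tperm i0 i1 != 1%g.
  by apply/eqP=> /permP/(_ i0)/eqP; rewrite tpermL perm1 eq_sym (negbTE i01).
have [[s1E d1i0]|[s1E d1i01]] :=
  reflection_moving_pair i01 r1R r1E d1p (fun j j0 j1 => (rfix j j0 j1).1);
have [[s2E d2i0]|[s2E d2i01]] :=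
  reflection_moving_pair i01 r2R r2E d2p (fun j j0 j1 => (rfix j j0 j1).2);
  move: s12; rewrite s1E s2E ?mulg1 ?mul1g => s12.
- by left; rewrite -d12 s1E perm1 exprMn d1i0 d2i0 mulr1.
- by rewrite s12 eqxx in tperm_neq1.
- by rewrite s12 eqxx in tperm_neq1.
- right; rewrite -!d12 s1E tpermL tpermR.
  by rewrite mulrACA [d2 i1 * _]mulrC d1i01 d2i01 mulr1.
Qed.

Lemma refl_length_diag_pair m p n (i0 i1 : 'I_n) (e : 'I_n -> algC) :
  (0 < m)%N -> i0 != i1 -> (forall j, (e j != 1) = (j \in [:: i0; i1])) ->
  e i0 ^+ (m %/ p) != 1 -> e i0 * e i1 != 1 ->
  prod_of_refl m p (monomial_mx 1 e) 3 -> refl_length_is m p (monomial_mx 1 e) 3.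
Proof.
move=> m_gt0 i01 eS ei0 ei01 g3; split=> // k k_lt3 g_k.
have cod2 : codim (monomial_mx 1 e) = 2%N.
  by rewrite (codim_diag_support (S := [:: i0; i1])) //= inE i01.
have := codim_prod_refl g_k; rewrite cod2 => k_ge2; case: g_k => rs [size_rs rsR eE].
have {k k_lt3 k_ge2 size_rs} : size rs = 2%N by lia.
case: rs rsR eE => [|r1 [|r2 [|]]] //= rsR; rewrite mulmx1 => /esym eE _.
have r1R : is_reflection m p r1 by apply: rsR; rewrite mem_head.
have r2R : is_reflection m p r2 by apply: rsR; rewrite !inE eqxx orbT.
have [h|h] := prod2_reflections_diag m_gt0 i01 eS r1R r2R eE.
  by rewrite h eqxx in ei0.
by rewrite h eqxx in ei01.
Qed.

Lemma refl_length_parity m n (g : 'M[algC]_n) k :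
  (0 < m)%N -> prod_of_refl m m g k -> codim g = k.-1 -> refl_length_is m m g k.
Proof.
move=> m_gt0 gk cod; split=> // k' k'_lt g_k'.
have := codim_prod_refl g_k'; rewrite cod => k'_ge.
have := det_prod_refl m_gt0 g_k'; rewrite (det_prod_refl m_gt0 gk) (_ : k = k'.+1); last by lia.
by rewrite exprS mulN1r => /eqP; rewrite -subr_eq0 -opprD oppr_eq0 -mulr2n mulrn_eq0 signr_eq0.
Qed.

Lemma refl_length_neq_codim_Gmpn m p n : (p %| m)%N -> (1 < p)%N -> (p < m)%N -> (2 <= n)%N ->
  exists (g : 'M[algC]_n) (k : nat),
    [/\ in_Gmpn m p g, refl_length_is m p g k & k <> codim g].
Proof.
move=> p_dvd_m p_gt1 p_lt_m n_ge2; have m_gt0 : (0 < m)%N by lia.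
have [z z_prim] := C_prim_root_exists m_gt0; have zm := prim_expr_order z_prim.
have z_neq1 k : (0 < k < m)%N -> z ^+ k != 1 by apply: prim_root_expr_neq1.
pose i0 := widen_ord n_ge2 (@Ordinal 2 0 isT); pose i1 := widen_ord n_ge2 (@Ordinal 2 1 isT).
have [i01 i10] : i0 != i1 /\ i1 != i0 by [].
pose rs := [:: refl_transp m i0 i1 z; refl_transp m i0 i1 1; refl_diag i1 (z ^+ p)].
pose e k := transp_weights m i0 i1 z k * diag_weights i1 (z ^+ p) k.
have rsR r : r \in rs -> is_reflection m p r.
  rewrite !inE => /or3P[] /eqP ->; try by apply: is_reflection_transp; rewrite ?expr1n.
  apply: is_reflection_diag => //; first by rewrite -exprM mulnC divnK.
  by rewrite z_neq1 //; lia.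
have gE : foldr mulmx 1%:M rs = monomial_mx 1 e.
  by rewrite /= mulmx1 mulmxA mul_refl_transp1 mul_diag_monomial_mx.
have g3 : prod_of_refl m p (monomial_mx 1 e) 3 by exists rs.
have ei0 : e i0 = z by rewrite /e /transp_weights /diag_weights eqxx (negbTE i01) mulr1.
have ei1 : e i1 = z ^+ p.-1.
  rewrite /e /transp_weights /diag_weights eqxx (negbTE i10) -exprD.
  by rewrite (_ : (m.-1 + p = m + p.-1)%N) ?exprD ?zm ?mul1r //; lia.
have eS j : (e j != 1) = (j \in [:: i0; i1]).
  rewrite !inE; have [->|j0] := eqVneq j i0; first by rewrite ei0 -[z]expr1 z_neq1 //; lia.
  have [->|j1] := eqVneq j i1; first by rewrite ei1 z_neq1 //; lia.
  by rewrite /e /transp_weights /diag_weights (negbTE j0) (negbTE j1) mulr1 eqxx.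
exists (monomial_mx 1 e), 3%N; split; first exact: in_Gmpn_prod_refl g3.
  apply: refl_length_diag_pair; rewrite ?ei0 ?ei1 -?exprS ?prednK ?z_neq1 //;
  by rewrite ?divn_gt0 ?ltn_Pdiv //; lia.
by rewrite (codim_diag_support (S := [:: i0; i1])) //= inE i01.
Qed.

Lemma refl_length_neq_codim_Gmmn m n : (3 <= m)%N -> (3 <= n)%N ->
  exists (g : 'M[algC]_n) (k : nat),
    [/\ in_Gmpn m m g, refl_length_is m m g k & k <> codim g].
Proof.
move=> m_ge3 n_ge3; have m_gt0 : (0 < m)%N by lia.
have [z z_prim] := C_prim_root_exists m_gt0; have zm := prim_expr_order z_prim.
have z_neq1 k : (0 < k < m)%N -> z ^+ k != 1 by apply: prim_root_expr_neq1.
pose i0 := widen_ord n_ge3 (@Ordinal 3 0 isT); pose i1 := widen_ord n_ge3 (@Ordinal 3 1 isT).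
pose i2 := widen_ord n_ge3 (@Ordinal 3 2 isT).
have [i01 i02 i12] : [/\ i0 != i1, i0 != i2 & i1 != i2] by [].
have [i10 i20 i21] : [/\ i1 != i0, i2 != i0 & i2 != i1] by [].
pose rs := [:: refl_transp m i0 i1 z; refl_transp m i0 i1 1;
               refl_transp m i1 i2 (z ^+ 2); refl_transp m i1 i2 1].
pose e k := transp_weights m i0 i1 z k * transp_weights m i1 i2 (z ^+ 2) k.
have rsR r : r \in rs -> is_reflection m m r.
  rewrite !inE => /or4P[] /eqP ->; apply: is_reflection_transp => //;
  by rewrite ?expr1n // -exprM mulnC exprM zm expr1n.
have gE : foldr mulmx 1%:M rs = monomial_mx 1 e.
  by rewrite /= mulmx1 !mulmxA mul_refl_transp1 -mulmxA mul_refl_transp1 mul_diag_monomial_mx.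
have g4 : prod_of_refl m m (monomial_mx 1 e) 4 by exists rs.
have ei0 : e i0 = z by rewrite /e /transp_weights eqxx (negbTE i01) mulr1.
have ei1 : e i1 = z.
  rewrite /e /transp_weights (negbTE i10) !eqxx -exprD.
  by rewrite (_ : (m.-1 + 2 = m + 1)%N) ?exprD ?zm ?mul1r //; lia.
have ei2 : e i2 = z ^+ (m - 2).
  rewrite /e /transp_weights (negbTE i20) (negbTE i21) eqxx mul1r -exprM.
  by rewrite (_ : (2 * m.-1 = m + (m - 2))%N) ?exprD ?zm ?mul1r //; lia.
have eS j : (e j != 1) = (j \in [:: i0; i1; i2]).
  have z1 : z != 1 by rewrite -[z]expr1 z_neq1 //; lia.
  rewrite !inE; have [->|j0] := eqVneq j i0; first by rewrite ei0.
  have [->|j1] := eqVneq j i1; first by rewrite ei1.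
  have [->|j2] := eqVneq j i2; first by rewrite ei2 z_neq1 //; lia.
  by rewrite /e /transp_weights (negbTE j0) (negbTE j1) (negbTE j2) mulr1 eqxx.
have cod3 : codim (monomial_mx 1 e) = 3%N.
  by rewrite (codim_diag_support (S := [:: i0; i1; i2])) //= !inE negb_or i01 i02 i12.
exists (monomial_mx 1 e), 4%N; split; first exact: in_Gmpn_prod_refl g4.
  exact: refl_length_parity.
by rewrite cod3.
Qed.

Theorem mainTheorem8 :
  (forall m p n : nat, (p %| m)%N -> (1 < p)%N -> (p < m)%N -> (2 <= n)%N ->
     exists (g : 'M[algC]_n) (k : nat),
       [/\ in_Gmpn m p g, refl_length_is m p g k & k <> codim g]) /\
  (forall m n : nat, (3 <= m)%N -> (3 <= n)%N ->
     exists (g : 'M[algC]_n) (k : nat),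
       [/\ in_Gmpn m m g, refl_length_is m m g k & k <> codim g]).
Proof. by split; [exact: refl_length_neq_codim_Gmpn | exact: refl_length_neq_codim_Gmmn]. Qed.
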